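(* Let $N\ge2$, $r>0$ and $0<\alpha\le r^{-1}$. Then \[ \int_0^r t(1-\alpha t)^{N-1}\,dt\ \le\ \frac{N}{N+1}\left(\int_0^r(1-\alpha t)^{N-1}\,dt\right)^2, \] with equality if and only if $\alpha=r^{-1}$. *)

From Stdlib Require Import Reals.
From Coquelicot Require Import Coquelicot.

(** The integrals [I0] of [(1 - alpha t)^(N-1)] and [I1] of [t (1 - alpha t)^(N-1)]
    are elementary; with [x = alpha r], [k = N] and [a = 1 - x],
    [N/(N+1) I0^2 - I1 = a^k (a^k - (1 - k x)) / (alpha^2 k (k+1))].
    By the strict Bernoulli inequality [(1 - x)^k > 1 - k x] for [0 < x <= 1]
    and [k >= 2], the second factor is positive, so the difference is
    nonnegative and vanishes exactly when [a = 0], i.e. [alpha = 1/r]. *)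
From Stdlib Require Import Reals Lra Lia.
From Coquelicot Require Import Coquelicot.
Open Scope R_scope.

Lemma Bernoulli_strict (x : R) (m : nat) : x <> 0 -> x <= 1 ->
  1 - INR (S (S m)) * x < (1 - x) ^ S (S m).
Proof.
intros Hx0 Hx1.
pose proof (Rsqr_pos_lt x Hx0) as Hsqr; unfold Rsqr in Hsqr.
induction m as [|m IH].
- simpl; nra.
- assert (Hgap : (1 - x) ^ S (S (S m)) - (1 - INR (S (S (S m))) * x)
         = (1 - x) * ((1 - x) ^ S (S m) - (1 - INR (S (S m)) * x))
           + INR (S (S m)) * (x * x)).
  { rewrite (S_INR (S (S m))); simpl pow; ring. }
  assert (0 < INR (S (S m))) by (apply lt_0_INR; lia).
  nra.
Qed.

Lemma INR_S_neq0 (n : nat) : INR (S n) <> 0.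
Proof. apply not_0_INR; lia. Qed.

Lemma RInt_pow_affine (alpha r : R) (n : nat) : alpha <> 0 ->
  RInt (fun t => (1 - alpha * t) ^ n) 0 r
  = (1 - (1 - alpha * r) ^ S n) / (alpha * INR (S n)).
Proof.
intros Ha; pose proof (INR_S_neq0 n) as Hn.
set (F t := - (1 - alpha * t) ^ S n / (alpha * INR (S n))).
apply is_RInt_unique.
replace (_ / _) with (F r - F 0)
  by (unfold F; rewrite Rmult_0_r, Rminus_0_r, pow1; field; auto).
apply (is_RInt_derive F).
- intros x _; unfold F; auto_derive; [easy|].
  change (match n with 0%nat => 1 | S _ => INR n + 1 end) with (INR (S n)).
  unfold Rminus; field; auto.
- intros x _; apply (ex_derive_continuous (fun t => (1 - alpha * t) ^ n)).
  auto_derive; easy.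
Qed.

Lemma RInt_id_mul_pow_affine (alpha r : R) (n : nat) : alpha <> 0 ->
  RInt (fun t => t * (1 - alpha * t) ^ n) 0 r
  = ((1 - (1 - alpha * r) ^ S (S n)) / (alpha * INR (S (S n)))
     - r * (1 - alpha * r) ^ S n) / (alpha * INR (S n)).
Proof.
intros Ha; pose proof (INR_S_neq0 n) as Hn; pose proof (INR_S_neq0 (S n)) as Hn'.
set (F t := - ((1 - alpha * t) ^ S (S n) / (alpha * INR (S (S n)))
               + t * (1 - alpha * t) ^ S n) / (alpha * INR (S n))).
apply is_RInt_unique.
replace (_ / _) with (F r - F 0)
  by (unfold F; rewrite Rmult_0_r, Rminus_0_r, pow1; field; auto).
apply (is_RInt_derive F).
- intros x _; unfold F; auto_derive; [easy|].
  change (match n with 0%nat => 1 | S _ => INR n + 1 end) with (INR (S n)).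
  unfold Rminus; field; auto.
- intros x _; apply (ex_derive_continuous (fun t => t * (1 - alpha * t) ^ n)).
  auto_derive; easy.
Qed.

Definition moment_gap (alpha x : R) (k : nat) : R :=
  (1 - x) ^ k * ((1 - x) ^ k - (1 - INR k * x)) / (alpha ^ 2 * INR k * INR (S k)).

Lemma RInt_moment_gap (alpha r : R) (n : nat) : alpha <> 0 ->
  INR (S n) / INR (S (S n)) * RInt (fun t => (1 - alpha * t) ^ n) 0 r ^ 2
    - RInt (fun t => t * (1 - alpha * t) ^ n) 0 r
  = moment_gap alpha (alpha * r) (S n).
Proof.
intros Ha; pose proof (INR_S_neq0 n) as Hn; pose proof (INR_S_neq0 (S n)) as Hn'.
rewrite RInt_pow_affine, RInt_id_mul_pow_affine by exact Ha; unfold moment_gap.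
change ((1 - alpha * r) ^ S (S n)) with ((1 - alpha * r) * (1 - alpha * r) ^ S n).
rewrite (S_INR (S n)) in *; set (k := INR (S n)) in *.
field; auto.
Qed.

Section MomentGapSign.

Variables (alpha x : R) (m : nat).
Hypotheses (Ha : alpha <> 0) (Hx0 : x <> 0) (Hx1 : x <= 1).

Let k := S (S m).

Lemma moment_gap_denom_pos : 0 < alpha ^ 2 * INR k * INR (S k).
Proof.
rewrite <- Rsqr_pow2.
apply Rmult_lt_0_compat; [apply Rmult_lt_0_compat|];
  [apply Rsqr_pos_lt, Ha | apply lt_0_INR; unfold k; lia ..].
Qed.

Lemma moment_gap_ge0 : 0 <= moment_gap alpha x k.
Proof.
pose proof (Bernoulli_strict x m Hx0 Hx1).
apply Rdiv_le_0_compat; [|exact moment_gap_denom_pos].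
apply Rmult_le_pos; [apply pow_le|]; unfold k; lra.
Qed.

Lemma moment_gap_eq0 : moment_gap alpha x k = 0 <-> x = 1.
Proof.
unfold moment_gap; split; intros H.
- pose proof (Bernoulli_strict x m Hx0 Hx1).
  pose proof moment_gap_denom_pos.
  apply Rmult_integral in H as [H|H]; [|now apply Rinv_neq_0_compat in H; [|lra]].
  apply Rmult_integral in H as [H|H]; [|unfold k in H; lra].
  destruct (Req_dec (1 - x) 0) as [|Hne]; [lra | now destruct (pow_nonzero _ k Hne H)].
- rewrite H, Rminus_diag, pow_i by (unfold k; lia); unfold Rdiv; ring.
Qed.

End MomentGapSign.

Theorem lemma2p10 (N : nat) (r alpha : R) (hN : (2 <= N)%nat) (hr : 0 < r)
  (ha0 : 0 < alpha) (ha1 : alpha <= / r) :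
  RInt (fun t => t * (1 - alpha * t) ^ (N - 1)) 0 r
    <= INR N / INR (N + 1) * (RInt (fun t => (1 - alpha * t) ^ (N - 1)) 0 r) ^ 2
  /\ (RInt (fun t => t * (1 - alpha * t) ^ (N - 1)) 0 r
        = INR N / INR (N + 1) * (RInt (fun t => (1 - alpha * t) ^ (N - 1)) 0 r) ^ 2
      <-> alpha = / r).
Proof.
destruct N as [|[|m]]; [lia | lia |].
replace (S (S m) - 1)%nat with (S m) by lia.
replace (S (S m) + 1)%nat with (S (S (S m))) by lia.
assert (Har : 0 < alpha * r <= 1).
{ split; [nra|]. apply (Rmult_le_compat_r r) in ha1; [|lra].
  rewrite Rinv_l in ha1; lra. }
pose proof (RInt_moment_gap alpha r (S m) ltac:(lra)) as Hgap.
pose proof (moment_gap_ge0 alpha (alpha * r) m ltac:(lra) ltac:(lra) ltac:(lra)) as Hge.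
pose proof (moment_gap_eq0 alpha (alpha * r) m ltac:(lra) ltac:(lra) ltac:(lra)) as Heq0.
split; [lra|].
rewrite <- Hgap in Heq0.
transitivity (alpha * r = 1); [rewrite <- Heq0; split; intros; lra|].
split; intros H.
- apply (Rmult_eq_reg_r r); [rewrite Rinv_l|]; lra.
- rewrite H, Rinv_l; lra.
Qed.
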